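(* Suppose the family of update functions $\mathrm{Upd}$ satisfies P1, P2, P3 and P5. Let $\mathcal{M}=(W,\mathcal{F})$ be a measure space, $\Pr\in\Delta_{\mathcal{M}}$ and $B\in\mathcal{F}$ with $\Pr(B)>0$ and $\mathrm{Upd}^{\mathcal{M}}(\Pr,B)=\emptyset$. Then for every measure space $\mathcal{M}'=(W',\mathcal{F}')$, every $\Pr'\in\Delta_{\mathcal{M}'}$ and every $B'\in\mathcal{F}'$ with $\Pr'(B')<1$, we have $\mathrm{Upd}^{\mathcal{M}'}(\Pr',B')=\emptyset$.
   Context: A measure space is a pair $\mathcal{M}=(W,\mathcal{F})$ with $\mathcal{F}$ an algebra of subsets of $W$; $\Delta_{\mathcal{M}}$ is the set of all probability measures on $\mathcal{M}$. An update function on $\mathcal{M}$ is a map $\mathrm{Upd}^{\mathcal{M}}:2^{\Delta_{\mathcal{M}}}\times\mathcal{F}\to 2^{\Delta_{\mathcal{M}}}$ such that $\mathrm{Upd}^{\mathcal{M}}(X,B)=\emptyset$ whenever $\Pr(B)=0$ for all $\Pr\in X$; $\mathrm{Upd}^{\mathcal{M}}(\Pr,B)$ means $\mathrm{Upd}^{\mathcal{M}}(\{\Pr\},B)$. A family $\mathrm{Upd}=\{\mathrm{Upd}^{\mathcal{M}}\}$ has one update function for each measure space. A representation shift from $\mathcal{M}=(W,\mathcal{F})$ to $\mathcal{M}'=(W',\mathcal{F}')$ is a surjection $f:W\to W'$ with $f^{-1}(B)\in\mathcal{F}$ for all $B\in\mathcal{F}'$; $(f^*(\Pr))(A)=\Pr(f^{-1}(A))$,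 $f^*(X)=\{f^*(\Pr):\Pr\in X\}$. Postulates (for all $\mathcal{M}=(W,\mathcal{F})$, $X\subseteq\Delta_{\mathcal{M}}$, $B,C\in\mathcal{F}$ unless stated otherwise): P1: $\mathrm{Upd}^{\mathcal{M}}(X,B)\subseteq\{\Pr\in\Delta_{\mathcal{M}}:\Pr(B)=1\}$. P2: for every representation shift $f$ from $\mathcal{M}$ to $\mathcal{M}'=(W',\mathcal{F}')$, $X\subseteq\Delta_{\mathcal{M}}$, $B\in\mathcal{F}'$: $\mathrm{Upd}^{\mathcal{M}'}(f^*(X),B)=f^*(\mathrm{Upd}^{\mathcal{M}}(X,f^{-1}(B)))$. P3: $\mathrm{Upd}^{\mathcal{M}}(\mathrm{Upd}^{\mathcal{M}}(X,B),C)=\mathrm{Upd}^{\mathcal{M}}(X,B\cap C)$. P5: $\mathrm{Upd}^{\mathcal{M}}(X,B)=\bigcup_{\Pr\in X}\mathrm{Upd}^{\mathcal{M}}(\Pr,B)$. *)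

From Stdlib Require Import Reals ProofIrrelevance FunctionalExtensionality PropExtensionality.
Open Scope R_scope.

Definition is_algebra {W : Type} (F : (W -> Prop) -> Prop) : Prop :=
  F (fun _ => True) /\
  (forall A, F A -> F (fun w => ~ A w)) /\
  (forall A B, F A -> F B -> F (fun w => A w \/ B w)).

Record mspace := MSpace {
  mcar : Type;
  mF : (mcar -> Prop) -> Prop;
  mF_alg : is_algebra mF }.

Definition event (M : mspace) := { A : mcar M -> Prop | mF M A }.

Definition ev_full (M : mspace) : event M :=
  exist _ (fun _ => True) (proj1 (mF_alg M)).

Definition ev_union (M : mspace) (A B : event M) : event M :=
  exist _ (fun w => proj1_sig A w \/ proj1_sig B w)
    (proj2 (proj2 (mF_alg M)) _ _ (proj2_sig A) (proj2_sig B)).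

Lemma alg_inter (M : mspace) (A B : mcar M -> Prop) :
  mF M A -> mF M B -> mF M (fun w => A w /\ B w).
Proof.
  intros hA hB. destruct (mF_alg M) as [_ [hC hU]].
  assert (E : (fun w => A w /\ B w) = (fun w => ~ (fun w => ~ A w \/ ~ B w) w)).
  { apply functional_extensionality; intro w; apply propositional_extensionality.
    simpl. split.
    - intros [a b] [na|nb]; auto.
    - intro h. split.
      + destruct (Classical_Prop.classic (A w)) as [a|na]; [exact a|exfalso; apply h; auto].
      + destruct (Classical_Prop.classic (B w)) as [b|nb]; [exact b|exfalso; apply h; auto]. }
  rewrite E. apply hC. apply hU; apply hC; assumption.
Qed.

Definition ev_inter (M : mspace) (A B : event M) : event M :=
  exist _ (fun w => proj1_sig A w /\ proj1_sig B w)
    (alg_inter M _ _ (proj2_sig A) (proj2_sig B)).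

Definition ev_disjoint (M : mspace) (A B : event M) : Prop :=
  forall w, proj1_sig A w -> proj1_sig B w -> False.

Definition is_prob (M : mspace) (p : event M -> R) : Prop :=
  (forall A, 0 <= p A) /\
  p (ev_full M) = 1 /\
  (forall A B, ev_disjoint M A B -> p (ev_union M A B) = p A + p B).

Definition ProbSet (M : mspace) := { p : event M -> R | is_prob M p }.

Definition pr {M : mspace} (P : ProbSet M) (A : event M) : R := proj1_sig P A.

Definition single {T : Type} (x : T) : T -> Prop := fun y => y = x.
Definition seteq {T : Type} (X Y : T -> Prop) : Prop := forall x, X x <-> Y x.

Definition UpdFamily := forall M : mspace, (ProbSet M -> Prop) -> event M -> (ProbSet M -> Prop).

Definition is_update_function (M : mspace)
    (U : (ProbSet M -> Prop) -> event M -> (ProbSet M -> Prop)) : Prop :=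
  forall X B, (forall P, X P -> pr P B = 0) -> forall Q, ~ U X B Q.

Definition is_update_family (Upd : UpdFamily) : Prop :=
  forall M, is_update_function M (Upd M).

Definition surjective_map {A B : Type} (f : A -> B) : Prop := forall b, exists a, f a = b.

Definition measurable_map (M M' : mspace) (f : mcar M -> mcar M') : Prop :=
  forall B : event M', mF M (fun w => proj1_sig B (f w)).

Definition ev_pre {M M' : mspace} {f : mcar M -> mcar M'}
  (hf : measurable_map M M' f) (B : event M') : event M :=
  exist _ (fun w => proj1_sig B (f w)) (hf B).

Lemma ev_eq (M : mspace) (A B : event M) : proj1_sig A = proj1_sig B -> A = B.
Proof.
  destruct A as [a ha], B as [b hb]; simpl; intro e; subst b.
  f_equal; apply proof_irrelevance.
Qed.

Lemma push_is_prob (M M' : mspace) (f : mcar M -> mcar M') (hf : measurable_map M M' f)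
  (P : ProbSet M) : is_prob M' (fun B => pr P (ev_pre hf B)).
Proof.
  destruct P as [p [h0 [h1 hadd]]]; unfold pr; simpl.
  split; [|split].
  - intro A; apply h0.
  - rewrite <- h1; f_equal; apply ev_eq; reflexivity.
  - intros A B hd.
    rewrite <- hadd.
    + f_equal; apply ev_eq; reflexivity.
    + intros w ha hb; exact (hd (f w) ha hb).
Qed.

Definition push {M M' : mspace} {f : mcar M -> mcar M'} (hf : measurable_map M M' f)
  (P : ProbSet M) : ProbSet M' :=
  exist _ (fun B => pr P (ev_pre hf B)) (push_is_prob M M' f hf P).

Definition push_set {M M' : mspace} {f : mcar M -> mcar M'} (hf : measurable_map M M' f)
  (X : ProbSet M -> Prop) : ProbSet M' -> Prop :=
  fun Q => exists P, X P /\ push hf P = Q.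

Definition P1 (Upd : UpdFamily) : Prop :=
  forall M X B Q, Upd M X B Q -> pr Q B = 1.

Definition P2 (Upd : UpdFamily) : Prop :=
  forall (M M' : mspace) (f : mcar M -> mcar M'),
    surjective_map f -> forall (hf : measurable_map M M' f) X (B : event M'),
    seteq (Upd M' (push_set hf X) B) (push_set hf (Upd M X (ev_pre hf B))).

Definition P3 (Upd : UpdFamily) : Prop :=
  forall M X B C, seteq (Upd M (Upd M X B) C) (Upd M X (ev_inter M B C)).

Definition P5 (Upd : UpdFamily) : Prop :=
  forall M X B, seteq (Upd M X B) (fun Q => exists P, X P /\ Upd M (single P) B Q).

From Stdlib Require Import Reals Lra Lia Classical ClassicalEpsilon
  FunctionalExtensionality PropExtensionality.
Open Scope R_scope.

(* Pushing forward along the indicator map of a nontrivial event B onto the two-point space (P2),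
   the emptiness of Upd(Pr, B) depends only on Pr(B). By P3 and P5 the set of probabilities whose
   updates are nonempty is upward closed; with P1 it is also closed under multiplication by
   1 - 1/k as soon as it contains some p <= 1 - 1/k. Hence a single nonempty update at a
   probability p < 1 makes every update at a positive probability nonempty.
   If B is the whole space, one pushes forward to the one-point space instead. *)

Notation emi := excluded_middle_informative.

Ltac destruct_emi := repeat match goal with |- context [emi ?Q] => destruct (emi Q) end.

Lemma pred_ext {T : Type} (A B : T -> Prop) : (forall w, A w <-> B w) -> A = B.
Proof.
  intro h; apply functional_extensionality; intro w; apply propositional_extensionality; auto.
Qed.

Lemma ev_ext {M : mspace} (A B : event M) :
  (forall w, proj1_sig A w <-> proj1_sig B w) -> A = B.
Proof. intro h; apply ev_eq, pred_ext, h. Qed.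

Lemma alg_const (M : mspace) (Q : Prop) : mF M (fun _ => Q).
Proof.
  destruct (mF_alg M) as [hT [hC _]].
  destruct (classic Q) as [q|nq].
  - replace (fun _ : mcar M => Q) with (fun _ : mcar M => True) by (apply pred_ext; tauto).
    exact hT.
  - replace (fun _ : mcar M => Q) with (fun _ : mcar M => ~ True) by (apply pred_ext; tauto).
    exact (hC _ hT).
Qed.

Section Probability.
Context {M : mspace} (P : ProbSet M).

Lemma pr_ge0 A : 0 <= pr P A.
Proof. exact (proj1 (proj2_sig P) A). Qed.

Lemma pr_full : pr P (ev_full M) = 1.
Proof. exact (proj1 (proj2 (proj2_sig P))). Qed.

Lemma pr_union (A X Y : event M) :
  (forall w, proj1_sig A w <-> proj1_sig X w \/ proj1_sig Y w) ->
  (forall w, proj1_sig X w -> proj1_sig Y w -> False) ->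
  pr P A = pr P X + pr P Y.
Proof.
  intros hA hd. rewrite (ev_ext A (ev_union M X Y)) by exact hA.
  exact (proj2 (proj2 (proj2_sig P)) X Y hd).
Qed.

Lemma pr_ext (A B : event M) :
  (forall w, proj1_sig A w <-> proj1_sig B w) -> pr P A = pr P B.
Proof. intro h; rewrite (ev_ext A B h); reflexivity. Qed.

Lemma pr_empty (A : event M) : (forall w, ~ proj1_sig A w) -> pr P A = 0.
Proof.
  intro h. enough (pr P A = pr P A + pr P A) by lra.
  apply pr_union; [tauto | intros w a _; exact (h w a)].
Qed.

Lemma pr_compl (A C : event M) :
  (forall w, proj1_sig C w <-> ~ proj1_sig A w) -> pr P A + pr P C = 1.
Proof.
  intro hC. rewrite <- pr_full. symmetry; apply pr_union.
  - intro w; simpl; rewrite hC; split; [intros _; apply classic | auto].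
  - intros w a c; apply hC in c; auto.
Qed.

Lemma pr_le1 (A : event M) : pr P A <= 1.
Proof.
  set (C := exist _ (fun w => ~ proj1_sig A w) (proj1 (proj2 (mF_alg M)) _ (proj2_sig A))
    : event M).
  assert (e := pr_compl A C (fun w => iff_refl _)).
  assert (0 <= pr P C) by apply pr_ge0. lra.
Qed.

Lemma inhabited_of_pr_pos (A : event M) : 0 < pr P A -> exists w, proj1_sig A w.
Proof.
  intro h. apply NNPP; intro hn.
  rewrite pr_empty in h; [lra | intros w hw; apply hn; eauto].
Qed.

Lemma co_inhabited_of_pr_lt1 (A : event M) : pr P A < 1 -> exists w, ~ proj1_sig A w.
Proof.
  intro h. apply NNPP; intro hn.
  rewrite (ev_ext A (ev_full M)), pr_full in h; [lra|].
  intro w; simpl; split; auto; intros _. apply NNPP; intro; apply hn; eauto.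
Qed.

End Probability.

Lemma prob_ext {M : mspace} (R1 R2 : ProbSet M) : (forall A, pr R1 A = pr R2 A) -> R1 = R2.
Proof.
  destruct R1 as [f1 h1], R2 as [f2 h2]; unfold pr; simpl; intro h.
  assert (f1 = f2) by (apply functional_extensionality; auto). subst.
  f_equal; apply proof_irrelevance.
Qed.

Definition discrete_space (T : Type) : mspace :=
  MSpace T (fun _ => True) (conj I (conj (fun _ _ => I) (fun _ _ _ _ => I))).

Definition ev_of {T : Type} (A : T -> Prop) : event (discrete_space T) := exist _ A I.

Definition bool_space := discrete_space bool.
Definition ev_true : event bool_space := ev_of (fun b => b = true).

Lemma pr_bool (R : ProbSet bool_space) (A : event bool_space) :
  pr R A = (if emi (proj1_sig A true) then pr R ev_true else 0) +
           (if emi (proj1_sig A false) then 1 - pr R ev_true else 0).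
Proof.
  assert (hF : pr R (ev_of (fun b => b = false)) = 1 - pr R ev_true).
  { enough (pr R ev_true + pr R (ev_of (fun b => b = false)) = 1) by lra.
    apply pr_compl; intros [|]; simpl; split; congruence. }
  rewrite (pr_union R A (ev_of (fun b => proj1_sig A b /\ b = true))
                        (ev_of (fun b => proj1_sig A b /\ b = false))).
  2:{ simpl; intros [|]; intuition congruence. }
  2:{ simpl; intros w [_ ->] [_ ?]; discriminate. }
  rewrite <- hF.
  f_equal; destruct (emi _) as [a|na].
  - apply pr_ext; simpl; intros [|]; intuition congruence.
  - apply pr_empty; simpl; intros [|] [x y]; first [contradiction | discriminate].
  - apply pr_ext; simpl; intros [|]; intuition congruence.
  - apply pr_empty; simpl; intros [|] [x y]; first [contradiction | discriminate].
Qed.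

Lemma prob_bool_ext (R1 R2 : ProbSet bool_space) : pr R1 ev_true = pr R2 ev_true -> R1 = R2.
Proof.
  intro e; apply prob_ext; intro A.
  rewrite (pr_bool R1 A), (pr_bool R2 A), e; reflexivity.
Qed.

Definition unit_space := discrete_space unit.

Lemma prob_unit_unique (R1 R2 : ProbSet unit_space) : R1 = R2.
Proof.
  apply prob_ext; intro A. destruct (classic (proj1_sig A tt)) as [h|h].
  - rewrite (ev_ext A (ev_full unit_space)), !pr_full by (intros []; simpl; tauto).
    reflexivity.
  - rewrite !pr_empty by (intros []; exact h). reflexivity.
Qed.

Definition indicator {M : mspace} (B : event M) (w : mcar M) : bool :=
  if emi (proj1_sig B w) then true else false.

Lemma indicator_measurable {M : mspace} (B : event M) :
  measurable_map M bool_space (indicator B).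
Proof.
  intro E. destruct (mF_alg M) as [_ [hC hU]].
  replace (fun w => proj1_sig E (indicator B w)) with
    (fun w => (proj1_sig E true /\ proj1_sig B w) \/ (proj1_sig E false /\ ~ proj1_sig B w)).
  - apply hU; apply alg_inter;
      solve [apply alg_const | apply proj2_sig | apply hC, proj2_sig].
  - apply pred_ext; intro w; unfold indicator; destruct (emi _); tauto.
Qed.

Lemma indicator_surjective {M : mspace} (B : event M) :
  (exists w, proj1_sig B w) -> (exists w, ~ proj1_sig B w) -> surjective_map (indicator B).
Proof.
  intros [w1 h1] [w2 h2] [|]; [exists w1 | exists w2];
    unfold indicator; destruct (emi _); tauto.
Qed.

Lemma indicator_pre_true {M : mspace} (B : event M) :
  ev_pre (indicator_measurable B) ev_true = B.
Proof.
  apply ev_ext; intro w; simpl; unfold indicator; destruct (emi _); intuition discriminate.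
Qed.

Lemma pr_push_indicator {M : mspace} (P : ProbSet M) (B : event M) :
  pr (push (indicator_measurable B) P) ev_true = pr P B.
Proof. unfold pr at 1; simpl; rewrite indicator_pre_true; reflexivity. Qed.

Definition to_unit {M : mspace} (w : mcar M) : unit := tt.

Lemma to_unit_measurable (M : mspace) : measurable_map M unit_space (@to_unit M).
Proof. intro E; exact (alg_const M (proj1_sig E tt)). Qed.

Lemma to_unit_surjective {M : mspace} (w : mcar M) : surjective_map (@to_unit M).
Proof. intros []; exists w; reflexivity. Qed.

Lemma to_unit_pre_full (M : mspace) :
  ev_pre (to_unit_measurable M) (ev_full unit_space) = ev_full M.
Proof. apply ev_eq; reflexivity. Qed.

Fixpoint fsum (n : nat) (f : nat -> R) : R :=
  match n with O => 0 | S m => fsum m f + f m end.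

Lemma fsum_ext n f g : (forall i, (i < n)%nat -> f i = g i) -> fsum n f = fsum n g.
Proof. induction n; intro h; simpl; auto. rewrite IHn, h; auto. Qed.

Lemma fsum_plus n f g : fsum n (fun i => f i + g i) = fsum n f + fsum n g.
Proof. induction n; simpl; [lra|]. rewrite IHn; lra. Qed.

Lemma fsum_nonneg n f : (forall i, 0 <= f i) -> 0 <= fsum n f.
Proof. induction n; intro h; simpl; [lra|]. specialize (IHn h); specialize (h n); lra. Qed.

Lemma fsum_const n c : fsum n (fun _ => c) = INR n * c.
Proof. induction n; simpl fsum; [simpl; lra|]. rewrite IHn, S_INR; lra. Qed.

Lemma fsum_single n j f :
  (j < n)%nat -> fsum n (fun i => if emi (i = j) then f i else 0) = f j.
Proof.
  induction n; intro hj; [lia|]. simpl.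
  destruct (Nat.eq_dec j n) as [->|ne].
  - rewrite (fsum_ext n _ (fun _ => 0)), fsum_const.
    + destruct (emi _); [lra|tauto].
    + intros i hi; destruct (emi _); [lia|reflexivity].
  - rewrite IHn by lia. destruct (emi _); [lia|lra].
Qed.

Lemma fsum_gt m f c :
  (0 < m)%nat -> (forall j, (j < m)%nat -> c < f j) -> INR m * c < fsum m f.
Proof.
  induction m as [|m IH]; intros hm h; [lia|].
  rewrite S_INR; simpl fsum.
  destruct m as [|m].
  - specialize (h 0%nat ltac:(lia)). simpl; lra.
  - assert (IH' := IH ltac:(lia) (fun j hj => h j ltac:(lia))).
    specialize (h (S m) ltac:(lia)). lra.
Qed.

Lemma exists_le_average n f :
  (0 < n)%nat -> exists j, (j < n)%nat /\ f j <= fsum n f / INR n.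
Proof.
  intro hn. assert (hn' : 0 < INR n) by (apply lt_0_INR; exact hn).
  apply NNPP; intro hall.
  assert (hlt : INR n * (fsum n f / INR n) < fsum n f).
  { apply fsum_gt; [exact hn|].
    intros j hj. apply Rnot_le_lt; intro hle; apply hall; eauto. }
  replace (INR n * (fsum n f / INR n)) with (fsum n f) in hlt by (field; lra). lra.
Qed.

Definition nat_space := discrete_space nat.

Definition weighted_pr (w : nat -> R) (N : nat) (A : event nat_space) : R :=
  fsum N (fun i => if emi (proj1_sig A i) then w i else 0).

Lemma weighted_is_prob w N :
  (forall i, 0 <= w i) -> fsum N w = 1 -> is_prob nat_space (weighted_pr w N).
Proof.
  intros hw hs. split; [|split].
  - intro A; apply fsum_nonneg; intro i; destruct (emi _); [apply hw | lra].
  - unfold weighted_pr. rewrite <- hs. apply fsum_ext; intros i _.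
    destruct (emi _) as [|n]; [reflexivity | exfalso; exact (n I)].
  - intros A B hd. unfold weighted_pr. rewrite <- fsum_plus. apply fsum_ext; intros i _.
    simpl; destruct_emi; try lra; try tauto.
    exfalso; eapply hd; eassumption.
Qed.

Definition weighted (w : nat -> R) (N : nat) (hw : forall i, 0 <= w i) (hs : fsum N w = 1)
  : ProbSet nat_space :=
  exist _ (weighted_pr w N) (weighted_is_prob w N hw hs).

Lemma pr_initial_segment (Q : ProbSet nat_space) m :
  pr Q (ev_of (fun i => (i < m)%nat)) = fsum m (fun j => pr Q (ev_of (fun i => i = j))).
Proof.
  induction m as [|m IH]; simpl fsum.
  - apply pr_empty; simpl; lia.
  - rewrite <- IH. apply pr_union; simpl; intros; lia.
Qed.

Lemma exists_light_point (Q : ProbSet nat_space) k :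
  (0 < k)%nat -> pr Q (ev_of (fun i => (i < k)%nat)) = 1 ->
  exists j, (j < k)%nat /\ pr Q (ev_of (fun i => i = j)) <= 1 / INR k.
Proof.
  intros hk hQ. rewrite pr_initial_segment in hQ. rewrite <- hQ.
  exact (exists_le_average k _ hk).
Qed.

Section Updates.

Variable Upd : UpdFamily.

Definition updatable {M : mspace} (P : ProbSet M) (B : event M) : Prop :=
  exists Q, Upd M (single P) B Q.

Hypothesis hU : is_update_family Upd.
Hypothesis h1 : P1 Upd.
Hypothesis h2 : P2 Upd.
Hypothesis h3 : P3 Upd.
Hypothesis h5 : P5 Upd.

Lemma updatable_pr_pos {M : mspace} (P : ProbSet M) (B : event M) :
  updatable P B -> 0 < pr P B.
Proof.
  intros [Q hQ]. destruct (Rle_lt_or_eq_dec 0 (pr P B) (pr_ge0 P B)) as [|e]; [assumption|].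
  exfalso; apply (hU M (single P) B) with Q; [|exact hQ].
  intros P0 ->; auto.
Qed.

Lemma upd_push_single {M M' : mspace} (f : mcar M -> mcar M') (hf : measurable_map M M' f)
  (P : ProbSet M) (E : event M') Q :
  Upd M' (push_set hf (single P)) E Q <-> Upd M' (single (push hf P)) E Q.
Proof.
  rewrite (h5 M' _ E Q). split.
  - intros [P0 [[Pm [-> <-]] hQ]]; exact hQ.
  - intro hQ; exists (push hf P); split; [exists P; split; reflexivity | exact hQ].
Qed.

Lemma updatable_shift {M M' : mspace} (f : mcar M -> mcar M') (hs : surjective_map f)
  (hf : measurable_map M M' f) (P : ProbSet M) (E : event M') :
  updatable P (ev_pre hf E) <-> updatable (push hf P) E.
Proof.
  split.
  - intros [Q hQ]. exists (push hf Q).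
    apply (upd_push_single f), (h2 M M' f hs hf).
    exists Q; split; [exact hQ | reflexivity].
  - intros [Q' hQ']. apply (upd_push_single f), (h2 M M' f hs hf) in hQ'.
    destruct hQ' as [Q [hQ _]]; exists Q; exact hQ.
Qed.

Lemma updatable_inter_l {M : mspace} (P : ProbSet M) (D C : event M) :
  updatable P (ev_inter M D C) -> updatable P D.
Proof.
  intros [Q hQ]. apply (h3 M (single P) D C), h5 in hQ.
  destruct hQ as [Q0 [hQ0 _]]; exists Q0; exact hQ0.
Qed.

Lemma updatable_inter_of_update {M : mspace} (P Q : ProbSet M) (D C : event M) :
  Upd M (single P) D Q -> updatable Q C -> updatable P (ev_inter M D C).
Proof.
  intros hQ [Q2 hQ2]. exists Q2. apply (h3 M (single P) D C), h5.
  exists Q; split; assumption.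
Qed.

(* By P2 along the indicator map, whether a nontrivial event is updatable depends only on its
   probability (updatable_iff_mass); this predicate records which probabilities qualify. *)
Definition updatable_mass (a : R) : Prop :=
  exists R0 : ProbSet bool_space, pr R0 ev_true = a /\ updatable R0 ev_true.

Lemma updatable_iff_mass {M : mspace} (P : ProbSet M) (B : event M) :
  (exists w, proj1_sig B w) -> (exists w, ~ proj1_sig B w) ->
  updatable P B <-> updatable_mass (pr P B).
Proof.
  intros hin hout.
  rewrite <- (indicator_pre_true B) at 1.
  rewrite (@updatable_shift M bool_space _ (indicator_surjective B hin hout)).
  split.
  - intro h; exists (push (indicator_measurable B) P); split; [apply pr_push_indicator | exact h].
  - intros [R0 [hR h]].
    replace (push (indicator_measurable B) P) with R0; [exact h|].
    apply prob_bool_ext; rewrite hR, pr_push_indicator; reflexivity.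
Qed.

Lemma updatable_full_transfer {M M' : mspace} (w : mcar M) (w' : mcar M')
  (P : ProbSet M) (P' : ProbSet M') :
  updatable P (ev_full M) -> updatable P' (ev_full M').
Proof.
  rewrite <- (to_unit_pre_full M), <- (to_unit_pre_full M').
  rewrite (@updatable_shift M unit_space _ (to_unit_surjective w)),
    (@updatable_shift M' unit_space _ (to_unit_surjective w')).
  rewrite (prob_unit_unique (push _ P') (push (to_unit_measurable M) P)); trivial.
Qed.

Lemma updatable_mass_range a : updatable_mass a -> 0 <= a <= 1.
Proof. intros [R0 [<- _]]; split; [apply pr_ge0 | apply pr_le1]. Qed.

(* On the three-point space with masses a, c - a, 1 - c, updating on {0} yields, by P3 and P5,
   an update on {0, 1}. *)
Lemma updatable_mass_up a c : updatable_mass a -> a <= c -> c <= 1 -> updatable_mass c.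
Proof.
  intros ha hac hc. destruct (updatable_mass_range a ha) as [ha0 _].
  set (w i := match i with O => a | 1%nat => c - a | 2%nat => 1 - c | _ => 0 end).
  assert (hw : forall i, 0 <= w i) by (intros [|[|[|i]]]; simpl; lra).
  assert (hs : fsum 3 w = 1) by (simpl; lra).
  set (nu := weighted w 3 hw hs).
  set (D0 := ev_of (fun i : nat => i = 0%nat)).
  set (D01 := ev_of (fun i : nat => i = 0%nat \/ i = 1%nat)).
  assert (hD0 : pr nu D0 = a)
    by (unfold pr; simpl; unfold weighted_pr; simpl; destruct_emi; first [lra | exfalso; lia]).
  assert (hD01 : pr nu D01 = c)
    by (unfold pr; simpl; unfold weighted_pr; simpl; destruct_emi; first [lra | exfalso; lia]).
  assert (hnu : updatable nu D0).
  { apply updatable_iff_mass; [exists 0%nat; reflexivity | exists 1%nat; simpl; lia |].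
    rewrite hD0; exact ha. }
  replace D0 with (ev_inter nat_space D01 D0) in hnu
    by (apply ev_ext; simpl; intro i; split; [tauto | intro; split; auto; lia]).
  rewrite <- hD01; apply updatable_iff_mass;
    [exists 0%nat; simpl; auto | exists 2%nat; simpl; lia |].
  exact (updatable_inter_l nu D01 D0 hnu).
Qed.

(* Put mass s uniformly on k points and update on them: some point keeps posterior mass at most
   1/k, so the posterior of the other k - 1 points is at least 1 - 1/k >= p, hence updatable by
   upward closure, and composing the two updates (P3) removes mass s/k from the prior. *)
Lemma updatable_mass_shrink p s k :
  updatable_mass p -> (2 <= k)%nat -> p <= 1 - 1 / INR k ->
  updatable_mass s -> updatable_mass (s * (1 - 1 / INR k)).
Proof.
  intros hp hk hpk hs0.
  destruct (updatable_mass_range s hs0) as [hs hs1].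
  assert (hK : 0 < INR k) by (apply lt_0_INR; lia).
  set (w i := if emi (i < k)%nat then s / INR k else if emi (i = k) then 1 - s else 0).
  assert (hw : forall i, 0 <= w i).
  { intro i; unfold w; destruct_emi; [apply Rle_mult_inv_pos| |]; lra. }
  assert (hmass : fsum k (fun i => if emi (i < k)%nat then w i else 0) = s).
  { rewrite (fsum_ext k _ (fun _ => s / INR k)), fsum_const; [field; lra|].
    intros i hi; unfold w; destruct_emi; reflexivity || lia. }
  assert (hsum : fsum (S k) w = 1).
  { simpl; rewrite (fsum_ext k w (fun _ => s / INR k)), fsum_const.
    - unfold w; destruct_emi; [lia | field; lra | tauto].
    - intros i hi; unfold w; destruct_emi; reflexivity || lia. }
  set (nu := weighted w (S k) hw hsum).
  set (D := ev_of (fun i : nat => (i < k)%nat)).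
  assert (hD : pr nu D = s).
  { unfold pr; simpl; unfold weighted_pr; simpl. rewrite hmass.
    destruct (emi _); [lia | lra]. }
  assert (hpoint : forall j, (j < k)%nat -> pr nu (ev_of (fun i => i = j)) = s / INR k).
  { intros j hj. unfold pr; simpl; unfold weighted_pr; cbn [proj1_sig ev_of].
    rewrite fsum_single by lia. unfold w; destruct_emi; reflexivity || lia. }
  assert (hnuD : updatable nu D).
  { apply updatable_iff_mass; [exists 0%nat | exists k | rewrite hD; exact hs0];
      unfold D; simpl; lia. }
  destruct hnuD as [Q hQ].
  destruct (exists_light_point Q k ltac:(lia) (h1 _ _ _ _ hQ)) as [j [hjk hQj]].
  set (C := ev_of (fun i : nat => (i < k)%nat /\ i <> j)).
  assert (hsplit : forall R0 : ProbSet nat_space,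
             pr R0 D = pr R0 (ev_inter nat_space D C) + pr R0 (ev_of (fun i => i = j))).
  { intro R0; apply pr_union; simpl.
    - intro i; destruct (Nat.eq_dec i j); intuition lia.
    - intros i [_ [_ ne]] e; contradiction. }
  assert (hQC : updatable Q C).
  { apply updatable_iff_mass.
    - destruct (Nat.eq_dec j 0) as [->|]; [exists 1%nat | exists 0%nat]; unfold C; simpl; lia.
    - exists k; unfold C; simpl; lia.
    - apply (updatable_mass_up p); [exact hp | | apply pr_le1].
      assert (pr Q C = pr Q (ev_inter nat_space D C))
        by (apply pr_ext; simpl; intro i; tauto).
      specialize (hsplit Q); rewrite (h1 _ _ _ _ hQ) in hsplit; lra. }
  replace (s * (1 - 1 / INR k)) with (pr nu (ev_inter nat_space D C)).
  - apply updatable_iff_mass.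
    + destruct (Nat.eq_dec j 0) as [->|]; [exists 1%nat | exists 0%nat];
        unfold D, C; simpl; lia.
    + exists k; unfold D; simpl; lia.
    + exact (updatable_inter_of_update nu Q D C hQ hQC).
  - specialize (hsplit nu); rewrite hD, hpoint in hsplit by exact hjk.
    replace (s * (1 - 1 / INR k)) with (s - s / INR k) by (field; lra); lra.
Qed.

(* Iterating the shrinking step with s := p r^n, r := 1 - 1/N >= p, drives the mass to 0. *)
Lemma updatable_mass_all p e :
  updatable_mass p -> p < 1 -> 0 < e <= 1 -> updatable_mass e.
Proof.
  intros hp hp1 he.
  destruct (updatable_mass_range p hp) as [hp0 _].
  destruct (archimed_cor1 (1 - p) ltac:(lra)) as [N [hN hN0]].
  assert (hN2 : (2 <= N)%nat).
  { destruct (Nat.eq_dec N 1) as [->|]; [simpl in hN; lra | lia]. }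
  set (r := 1 - 1 / INR N).
  assert (hpr : p <= r) by (unfold r, Rdiv; lra).
  assert (hr1 : r < 1).
  { enough (0 < 1 / INR N) by (unfold r; lra).
    unfold Rdiv; rewrite Rmult_1_l; apply Rinv_0_lt_compat, lt_0_INR; exact hN0. }
  assert (hiter : forall n, updatable_mass (p * r ^ n)).
  { induction n as [|n IH]; [rewrite Rmult_1_r; exact hp|].
    replace (p * r ^ S n) with (p * r ^ n * r) by (simpl; ring).
    exact (updatable_mass_shrink p _ N hp hN2 hpr IH). }
  destruct (pow_lt_1_zero r ltac:(rewrite Rabs_pos_eq; lra) e (proj1 he)) as [n hn].
  specialize (hn n (le_n n)). rewrite Rabs_pos_eq in hn by (apply pow_le; lra).
  apply (updatable_mass_up (p * r ^ n)); [apply hiter | | apply he].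
  assert (0 <= r ^ n) by (apply pow_le; lra). nra.
Qed.

End Updates.

Theorem lemmaA3 (Upd : UpdFamily) (hUpd : is_update_family Upd)
  (h1 : P1 Upd) (h2 : P2 Upd) (h3 : P3 Upd) (h5 : P5 Upd)
  (Ms : mspace) (P : ProbSet Ms) (B : event Ms)
  (hB : 0 < pr P B) (hE : forall Q, ~ Upd Ms (single P) B Q) :
  forall (M' : mspace) (P' : ProbSet M') (B' : event M'),
    pr P' B' < 1 -> forall Q, ~ Upd M' (single P') B' Q.
Proof.
  intros M' P' B' hB' Q hQ.
  assert (hnot : ~ updatable Upd P B) by (intros [Q0 hQ0]; exact (hE Q0 hQ0)).
  assert (hupd : updatable Upd P' B') by (exists Q; exact hQ).
  destruct (inhabited_of_pr_pos P B hB) as [w hw].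
  destruct (inhabited_of_pr_pos P' B' (updatable_pr_pos Upd hUpd P' B' hupd)) as [w' hw'].
  destruct (classic (exists v, ~ proj1_sig B v)) as [hout | hfull].
  - apply hnot, (updatable_iff_mass Upd h2 h5); [exists w; exact hw | exact hout |].
    apply (updatable_mass_all Upd h1 h2 h3 h5 (pr P' B'));
      [| exact hB' | split; [exact hB | apply pr_le1]].
    apply (updatable_iff_mass Upd h2 h5); [exists w'; exact hw' | | exact hupd].
    exact (co_inhabited_of_pr_lt1 P' B' hB').
  - replace B with (ev_full Ms) in hnot.
    + apply hnot, (updatable_full_transfer Upd h2 h5 w' w P').
      replace B' with (ev_inter M' (ev_full M') B') in hupd by (apply ev_ext; simpl; tauto).
      exact (updatable_inter_l Upd h3 h5 P' _ _ hupd).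
    + apply ev_ext; intro v; simpl; split; [intros _ | trivial].
      apply NNPP; intro hv; apply hfull; exists v; exact hv.
Qed.
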